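(* Suppose Assumption 1 holds. Let $x\in\operatorname{dom}\psi$, let $H$ be a symmetric matrix such that $Q \coloneqq Q^x_H$ is $\sigma$-strongly convex for some $\sigma>0$, and let $d$ satisfy the $\eta$-inexactness condition for $Q$ for some $\eta\in[0,1)$. Then, with $\Delta \coloneqq \nabla f(x)^Td + \psi(x+d)-\psi(x)$, $$\Delta \le -\frac12\left(\frac{1-\sqrt\eta}{1+\sqrt\eta}\,\sigma\|d\|^2 + d^THd\right) \le -\frac12\left(\frac{1-\sqrt\eta}{1+\sqrt\eta}\,\sigma + \lambda_{\min}(H)\right)\|d\|^2.$$ Moreover, if $(1-\sqrt\eta)\sigma + (1+\sqrt\eta)\lambda_{\min}(H) >0$, then for any $\beta,\gamma\in(0,1)$ the backtracking procedure that returns $\alpha=\beta^i$ for the smallest nonnegative integer $i$ with $F(x+\alpha d)\le F(x)+\alpha\gamma\Delta$ terminates after finitely many steps, and the returned $\alpha$ satisfies $$\alpha \ge \min\left\{1,\ \beta(1-\gamma)\frac{(1-\sqrt\eta)\sigma + (1+\sqrt\eta)\lambda_{\min}(H)}{L(1+\sqrt\eta)}\right\}.$$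
   Context: Problem setting: $F(x)=f(x)+\psi(x)$ on $\mathbb{R}^n$. Assumption 1: $f:\mathbb{R}^n\to\mathbb{R}$ is differentiable with $L$-Lipschitz continuous gradient for some $L>0$; $\psi:\mathbb{R}^n\to\mathbb{R}\cup\{+\infty\}$ is convex, proper and closed; $F$ is bounded below; and the solution set $\Omega=\{x: F(x)=F^*\}$, $F^*=\inf F$, is nonempty. For $x\in\mathbb{R}^n$ and a symmetric matrix $H$, $Q^x_H(d) \coloneqq \nabla f(x)^T d + \frac12 d^T H d + \psi(x+d) - \psi(x)$ (so $Q^x_H(0)=0$) and $Q^*\coloneqq\inf_d Q^x_H(d)$. A vector $d$ satisfies the $\eta$-inexactness condition (for $Q=Q^x_H$) if $Q(d)-Q^*\le \eta(Q(0)-Q^* )$, equivalently $Q(d)\le(1-\eta)Q^*$. $\lambda_{\min}(H)$ denotes the smallest eigenvalue of $H$. *)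

From mathcomp Require Import all_boot.
From Stdlib Require Import Reals Lra.
Open Scope R_scope.

Definition vec (n : nat) := 'I_n -> R.
Definition mat (n : nat) := 'I_n -> 'I_n -> R.

Definition vadd {n} (x y : vec n) : vec n := fun i => x i + y i.
Definition vsub {n} (x y : vec n) : vec n := fun i => x i - y i.
Definition vscale {n} (t : R) (x : vec n) : vec n := fun i => t * x i.
Definition dot {n} (x y : vec n) : R := \big[Rplus/0]_(i < n) (x i * y i).
Definition norm {n} (x : vec n) : R := sqrt (dot x x).
Definition matvec {n} (H : mat n) (x : vec n) : vec n :=
  fun i => \big[Rplus/0]_(j < n) (H i j * x j).
Definition quad {n} (H : mat n) (d : vec n) : R := dot d (matvec H d).
Definition mat_symmetric {n} (H : mat n) : Prop := forall i j, H i j = H j i.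

Definition is_eigenvalue {n} (H : mat n) (lam : R) : Prop :=
  exists v : vec n, (exists i, v i <> 0) /\ forall i, matvec H v i = lam * v i.
Definition is_lambda_min {n} (H : mat n) (lam : R) : Prop :=
  is_eigenvalue H lam /\ forall mu, is_eigenvalue H mu -> lam <= mu.

Inductive ereal := Fin (r : R) | PInf.
Definition ele (a b : ereal) : Prop :=
  match a, b with
  | _, PInf => True
  | PInf, Fin _ => False
  | Fin x, Fin y => x <= y
  end.
Definition elt (a b : ereal) : Prop :=
  match a, b with
  | Fin x, PInf => True
  | PInf, _ => False
  | Fin x, Fin y => x < y
  end.
Definition eadd_r (a : ereal) (r : R) : ereal :=
  match a with Fin x => Fin (x + r) | PInf => PInf end.
(* real value of a finite extended real (only used on finite values) *)
Definition eval_r (a : ereal) : R := match a with Fin x => x | PInf => 0 end.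

Definition has_gradient {n} (f : vec n -> R) (g : vec n -> vec n) : Prop :=
  forall x eps, 0 < eps -> exists delta, 0 < delta /\
    forall h : vec n, norm h < delta ->
      Rabs (f (vadd x h) - f x - dot (g x) h) <= eps * norm h.
Definition lipschitz {n} (g : vec n -> vec n) (L : R) : Prop :=
  forall x y, norm (vsub (g x) (g y)) <= L * norm (vsub x y).

Definition econvex {n} (p : vec n -> ereal) : Prop :=
  forall a b ra rb t, p a = Fin ra -> p b = Fin rb -> 0 <= t <= 1 ->
    ele (p (vadd (vscale t a) (vscale (1 - t) b))) (Fin (t * ra + (1 - t) * rb)).
Definition eproper {n} (p : vec n -> ereal) : Prop := exists x, p x <> PInf.
Definition eclosed {n} (p : vec n -> ereal) : Prop :=
  forall x c, elt (Fin c) (p x) -> exists delta, 0 < delta /\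
    forall y, norm (vsub y x) < delta -> elt (Fin c) (p y).
Definition strongly_convex {n} (Q : vec n -> ereal) (sigma : R) : Prop :=
  forall a b ra rb t, Q a = Fin ra -> Q b = Fin rb -> 0 <= t <= 1 ->
    ele (Q (vadd (vscale t a) (vscale (1 - t) b)))
        (Fin (t * ra + (1 - t) * rb - sigma / 2 * t * (1 - t) * (norm (vsub a b))^2)).

Definition Fobj {n} (f : vec n -> R) (psi : vec n -> ereal) (x : vec n) : ereal :=
  eadd_r (psi x) (f x).

Definition Qmodel {n} (gx : vec n) (H : mat n) (psi : vec n -> ereal) (x : vec n)
  (d : vec n) : ereal :=
  eadd_r (psi (vadd x d)) (dot gx d + / 2 * quad H d - eval_r (psi x)).

Definition is_inf {n} (Q : vec n -> ereal) (m : R) : Prop :=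
  (forall d, ele (Fin m) (Q d)) /\
  (forall eps, 0 < eps -> exists d, elt (Q d) (Fin (m + eps))).

Definition eta_inexact {n} (Q : vec n -> ereal) (eta : R) (d : vec n) : Prop :=
  exists Qstar, is_inf Q Qstar /\
    ele (Q d) (Fin (Qstar + eta * (eval_r (Q (fun _ => 0))- Qstar))).

Definition armijo {n} (f : vec n -> R) (psi : vec n -> ereal) (x d : vec n)
  (alpha gamma Delta : R) : Prop :=
  ele (Fobj f psi (vadd x (vscale alpha d)))
      (Fin (eval_r (Fobj f psi x) + alpha * gamma * Delta)).

(* Strong convexity of Q along the segment [0, d], combined with Q* <= Q(t d) and
   Q(d) <= (1 - eta) Q*, gives at t = 1 / (1 + sqrt eta) the bound
   Q(d) <= - (1 - sqrt eta) / (1 + sqrt eta) * sigma |d|^2 / 2 (for eta = 0 as t -> 1).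
   Since Q(d) = Delta + d^T H d / 2 this is the first inequality, and the spectral
   theorem gives d^T H d >= lambda_min |d|^2.  For the line search, the descent lemma
   for f and convexity of psi give F(x + a d) <= F(x) + a Delta + L a^2 |d|^2 / 2, so
   the Armijo test accepts every a <= (1 - gamma) kappa / (L (1 + sqrt eta)), with
   kappa = (1 - sqrt eta) sigma + (1 + sqrt eta) lambda_min: the first accepted
   beta ^ i is 1 or beta times a rejected step above that threshold. *)

From mathcomp Require Import all_boot all_order all_algebra.
From mathcomp Require Import Rstruct.
From mathcomp.real_closed Require Import complex.
From Stdlib Require Import Reals Lra Lia Wf_nat Classical FunctionalExtensionality.
Import GRing.Theory Num.Theory.
Set Implicit Arguments. Unset Strict Implicit.

Section LambdaMin.
Local Open Scope ring_scope.
Local Open Scope sesquilinear_scope.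
Variables (n : nat) (H : mat n) (lam : R).
Hypotheses (Hsym : mat_symmetric H) (Hlam : is_lambda_min H lam).
Local Notation RC := (real_complex R).

Definition complexmx : 'M[R[i]]_n := \matrix_(i, j) RC (H i j).

Lemma complexmx_herm : complexmx \is hermsymmx.
Proof.
apply/is_hermitianmxP; rewrite expr0 scale1r; apply/matrixP => i j.
by rewrite !mxE Hsym; exact: (esym (conjc_real _)).
Qed.

Let ReD : {morph @complex.Re R : x y / x + y}. Proof. by case=> ? ? [] ? ?. Qed.
Let ImD : {morph @complex.Im R : x y / x + y}. Proof. by case=> ? ? [] ? ?. Qed.

Let ReM_real (z : R[i]) h : complex.Re (RC h * z) = h * complex.Re z.
Proof. by case: z => a b /=; rewrite mul0r subr0. Qed.
Let ImM_real (z : R[i]) h : complex.Im (RC h * z) = h * complex.Im z.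
Proof. by case: z => a b /=; rewrite mul0r addr0. Qed.

Lemma real_complex_Re (z : R[i]) : z \is Num.real -> z = RC (complex.Re z).
Proof.
case: z => a b /orP [] /=; rewrite lecE /= => /andP [/eqP h _].
  by rewrite h.
by rewrite -h.
Qed.

(* The real and imaginary parts of a complex eigenvector of the real symmetric H
   are real eigenvectors, and one of them is nonzero. *)
Lemma is_eigenvalue_complex (mu : R) (r : 'rV[R[i]]_n) :
  r != 0 -> r *m complexmx = RC mu *: r -> is_eigenvalue H mu.
Proof.
move=> r_neq0 /matrixP eig.
have eigRe i : matvec H (fun j => complex.Re (r 0 j)) i = mu * complex.Re (r 0 i).
  move: (eig 0 i); rewrite !mxE => /(congr1 (@complex.Re R)).
  rewrite (big_morph _ ReD (erefl _)) ReM_real => <-.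
  by apply: eq_bigr => j _; rewrite mxE mulrC ReM_real Hsym.
have eigIm i : matvec H (fun j => complex.Im (r 0 j)) i = mu * complex.Im (r 0 i).
  move: (eig 0 i); rewrite !mxE => /(congr1 (@complex.Im R)).
  rewrite (big_morph _ ImD (erefl _)) ImM_real => <-.
  by apply: eq_bigr => j _; rewrite mxE mulrC ImM_real Hsym.
have [[i Rei]|Re0] := classic (exists i, complex.Re (r 0 i) <> 0).
  by exists (fun j => complex.Re (r 0 j)); split; first by exists i.
exists (fun j => complex.Im (r 0 j)); split => //.
apply: NNPP => Im0; move/eqP: r_neq0; apply; apply/matrixP => i j.
rewrite ord1 mxE.
have Rej : complex.Re (r 0 j) = 0 by apply: NNPP => h; apply: Re0; exists j.
have Imj : complex.Im (r 0 j) = 0 by apply: NNPP => h; apply: Im0; exists j.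
by move: Rej Imj; case: (r 0 j) => a b /= -> ->.
Qed.

Local Notation P := (spectralmx complexmx).
Local Notation D := (spectral_diag complexmx).

Lemma complexmx_spectral : complexmx = invmx P *m diag_mx D *m P.
Proof. exact/orthomx_spectralP/hermitian_normalmx/complexmx_herm. Qed.

Lemma spectral_diag_real k : D 0 k = RC (complex.Re (D 0 k)).
Proof. exact/real_complex_Re/(mxOverP (hermitian_spectral_diag_real complexmx_herm)). Qed.

Lemma lambda_min_le_spectral_diag k : lam <= complex.Re (D 0 k).
Proof.
apply/RleP/(proj2 Hlam)/(@is_eigenvalue_complex _ (row k P)).
  apply/negP => /eqP rk0.
  have := congr1 (row k) (elimT unitarymxP (spectral_unitarymx complexmx)).
  rewrite row_mul rk0 mul0mx => /matrixP /(_ 0 k); rewrite !mxE eqxx /=.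
  by move/eqP; rewrite eq_sym oner_eq0.
have PA : P *m complexmx = diag_mx D *m P.
  by rewrite [X in P *m X]complexmx_spectral !mulmxA mulmxV ?mul1mx // spectral_unit.
by rewrite -row_mul PA row_mul row_diag_mx -spectral_diag_real -scalemxAl -rowE.
Qed.

Lemma lambda_min_quad_le (d : vec n) : lam * dot d d <= quad H d.
Proof.
pose u : 'rV[R[i]]_n := \row_j RC (d j).
pose w := u *m P^t*.
have PtP : invmx P = P^t* := invmx_unitary (spectral_unitarymx complexmx).
have quadE : RC (quad H d) = (u *m complexmx *m u^t*) 0 0.
  rewrite !mxE rmorph_sum; apply: eq_bigr => i _.
  rewrite !mxE rmorphM rmorph_sum /= mulrC; congr (_ * _); last exact: esym (conjc_real _).
  by apply: eq_bigr => j _; rewrite !mxE rmorphM /= Hsym mulrC.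
have diagE : u *m complexmx *m u^t* = w *m diag_mx D *m w^t*.
  by rewrite [X in u *m X]complexmx_spectral PtP /w trmx_mul map_mxM trmxCK !mulmxA.
have dotE : RC (dot d d) = (w *m w^t*) 0 0.
  rewrite /w trmx_mul map_mxM trmxCK -PtP mulmxA -(mulmxA u) mulVmx ?spectral_unit //.
  rewrite mulmx1 !mxE rmorph_sum; apply: eq_bigr => k _.
  by rewrite !mxE rmorphM /=; congr (_ * _); exact: esym (conjc_real _).
suff : 0 <= RC (quad H d - lam * dot d d) by rewrite ler0c subr_ge0.
rewrite rmorphB rmorphM /= quadE diagE dotE mul_mx_diag !mxE mulr_sumr -sumrB.
apply: sumr_ge0 => k _; rewrite !mxE mulrAC [RC lam * _]mulrC -mulrBr.
apply: mulr_ge0; first exact: mulcJ_ge0.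
by rewrite spectral_diag_real -rmorphB ler0c subr_ge0 lambda_min_le_spectral_diag.
Qed.
End LambdaMin.

Section DotProduct.
Variable n : nat.
Implicit Types (a b c : vec n) (t : R).

Lemma dot_comm a b : dot a b = dot b a.
Proof. by apply: eq_bigr => i _; exact: Rmult_comm. Qed.

Lemma dotDl a b c : dot (vadd a b) c = dot a c + dot b c.
Proof. by rewrite /dot -big_split; apply: eq_bigr => i _; exact: Rmult_plus_distr_r. Qed.

Lemma dotZl t a b : dot (vscale t a) b = t * dot a b.
Proof. by rewrite /dot big_distrr; apply: eq_bigr => i _; exact: Rmult_assoc. Qed.

Lemma dotBl a b c : dot (vsub a b) c = dot a c - dot b c.
Proof.
have -> : vsub a b = vadd a (vscale (-1) b).
  by apply: functional_extensionality => i; rewrite /vsub /vadd /vscale; ring.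
by rewrite dotDl dotZl; ring.
Qed.

Lemma dot0r a : dot a (fun _ => 0) = 0.
Proof. by rewrite /dot big1 // => i _; exact: Rmult_0_r. Qed.

Lemma dot_ge0 a : 0 <= dot a a.
Proof. by apply: big_ind => [|u v|i _]; [lra | lra | nra]. Qed.

Lemma dotDr a b c : dot c (vadd a b) = dot c a + dot c b.
Proof. by rewrite dot_comm dotDl !(dot_comm c). Qed.

Lemma dotZr t a b : dot a (vscale t b) = t * dot a b.
Proof. by rewrite dot_comm dotZl dot_comm. Qed.

Lemma norm_ge0 a : 0 <= norm a.
Proof. exact: sqrt_pos. Qed.

Lemma norm_sq a : norm a ^ 2 = dot a a.
Proof. exact/pow2_sqrt/dot_ge0. Qed.

Lemma norm_scale t a : norm (vscale t a) = Rabs t * norm a.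
Proof.
rewrite /norm dotZl dotZr -Rmult_assoc -/(Rsqr t).
by rewrite sqrt_mult_alt ?sqrt_Rsqr_abs //; exact: Rle_0_sqr.
Qed.

Lemma quadratic_ge0_discriminant (p q r : R) : 0 <= p ->
  (forall t, 0 <= p * t * t + 2 * q * t + r) -> q * q <= p * r.
Proof.
move=> p_ge0 nonneg.
have [p0|p_gt0] : p = 0 \/ 0 < p by lra.
  have [q0|q_neq0] : q = 0 \/ q <> 0 by lra.
    by rewrite p0 q0; lra.
  have := nonneg (- (r + 1) / (2 * q)).
  have -> : p * (- (r + 1) / (2 * q)) * (- (r + 1) / (2 * q))
            + 2 * q * (- (r + 1) / (2 * q)) + r = -1 by rewrite p0; field.
  lra.
have := nonneg (- q / p).
have -> : p * (- q / p) * (- q / p) + 2 * q * (- q / p) + r = (p * r - q * q) / p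
  by field; lra.
move=> h; suff : 0 <= p * r - q * q by lra.
have -> : p * r - q * q = p * ((p * r - q * q) / p) by field; lra.
exact: Rmult_le_pos (Rlt_le _ _ p_gt0) h.
Qed.

Lemma cauchy_schwarz a b : Rabs (dot a b) <= norm a * norm b.
Proof.
have disc : dot a b * dot a b <= dot a a * dot b b.
  apply: quadratic_ge0_discriminant; first exact: dot_ge0.
  move=> t; have := dot_ge0 (vadd (vscale t a) b).
  rewrite !dotDl !dotDr !dotZl !dotZr (dot_comm b a); lra.
rewrite /norm -sqrt_mult_alt; last exact: dot_ge0.
by rewrite -sqrt_Rsqr_abs; exact: sqrt_le_1_alt.
Qed.
End DotProduct.

Section Descent.
Variables (n : nat) (f : vec n -> R) (g : vec n -> vec n) (L : R).
Hypotheses (Hgrad : has_gradient f g) (Hlip : lipschitz g L).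

Lemma vadd_vscale_line (x h : vec n) s ds :
  vadd (vadd x (vscale s h)) (vscale ds h) = vadd x (vscale (s + ds) h).
Proof. by apply: functional_extensionality => i; rewrite /vadd /vscale; ring. Qed.

Lemma derivable_pt_lim_line (x h : vec n) s :
  derivable_pt_lim (fun s => f (vadd x (vscale s h))) s
    (dot (g (vadd x (vscale s h))) h).
Proof.
move=> eps eps_gt0.
set N := norm h; set y := vadd x (vscale s h).
have N_ge0 : 0 <= N by exact: norm_ge0.
set eps' := eps / (2 * (N + 1)).
have eps'N : eps' * (N + 1) = eps / 2 by rewrite /eps'; field; lra.
have eps'_gt0 : 0 < eps' by apply: Rdiv_lt_0_compat; lra.
have [delta [delta_gt0 near_y]] := Hgrad y eps'_gt0.
have delta'_gt0 : 0 < delta / (N + 1) by apply: Rdiv_lt_0_compat; lra.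
exists (mkposreal _ delta'_gt0) => ds ds_neq0 /= ds_small.
rewrite -vadd_vscale_line -/y.
have ds_gt0 : 0 < Rabs ds by exact: Rabs_pos_lt.
have step_small : Rabs ds * N < delta.
  have : Rabs ds * (N + 1) < delta / (N + 1) * (N + 1) by apply: Rmult_lt_compat_r; lra.
  have -> : delta / (N + 1) * (N + 1) = delta by field; lra.
  nra.
have := near_y (vscale ds h); rewrite norm_scale dotZr -/N => /(_ step_small).
set F := f (vadd y (vscale ds h)) => bound.
have -> : (F - f y) / ds - dot (g y) h = (F - f y - ds * dot (g y) h) / ds
  by field.
rewrite /Rdiv Rabs_mult Rabs_inv.
apply: (Rle_lt_trans _ (eps' * (Rabs ds * N) * / Rabs ds)).
  by apply: Rmult_le_compat_r; first (left; apply: Rinv_0_lt_compat).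
have -> : eps' * (Rabs ds * N) * / Rabs ds = eps' * N by field; lra.
nra.
Qed.

Lemma lipschitz_dot_increment (x h : vec n) s : 0 <= s ->
  dot (g (vadd x (vscale s h))) h - dot (g x) h <= L * s * norm h ^ 2.
Proof.
move=> s_ge0; set y := vadd x (vscale s h).
have yx : vsub y x = vscale s h.
  by apply: functional_extensionality => i; rewrite /y /vsub /vadd /vscale; ring.
have := Hlip y x; rewrite yx norm_scale Rabs_pos_eq // => lip.
rewrite -dotBl; apply: (Rle_trans _ _ _ (Rle_abs _)).
apply: (Rle_trans _ _ _ (cauchy_schwarz _ _)).
have := norm_ge0 h; nra.
Qed.

Lemma descent_lemma (x h : vec n) :
  f (vadd x h) <= f x + dot (g x) h + L / 2 * norm h ^ 2.
Proof.
set K := dot (g x) h; set N := norm h.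
pose phi s := f (vadd x (vscale s h)) - K * s - L / 2 * N ^ 2 * s ^ 2.
pose phi' s := dot (g (vadd x (vscale s h))) h - K * 1
               - L / 2 * N ^ 2 * (INR 2 * s ^ Nat.pred 2).
have phi_deriv s : 0 <= s <= 1 -> derivable_pt_lim phi s (phi' s).
  move=> _; apply: derivable_pt_lim_minus; first apply: derivable_pt_lim_minus.
  - exact: derivable_pt_lim_line.
  - exact: derivable_pt_lim_scal id K s 1 (derivable_pt_lim_id s).
  - exact: derivable_pt_lim_scal (fun y => y ^ 2) _ _ _ (derivable_pt_lim_pow _ _).
have [s [phi_1_0 [s_gt0 _]]] := MVT_cor2 phi phi' 0 1 Rlt_0_1 phi_deriv.
have : phi' s <= 0.
  have := lipschitz_dot_increment x h (Rlt_le _ _ s_gt0).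
  rewrite /phi' /= -/N -/K; lra.
have line0 : vadd x (vscale 0 h) = x.
  by apply: functional_extensionality => i; rewrite /vadd /vscale; ring.
have line1 : vscale 1 h = h.
  by apply: functional_extensionality => i; rewrite /vscale; ring.
move: phi_1_0; rewrite /phi line0 line1; lra.
Qed.
End Descent.

Lemma le_of_forall_lt1 (q a : R) : (forall t, 0 <= t < 1 -> q <= a * t) -> q <= a.
Proof.
move=> le_at; have q_le0 : q <= 0 by have := le_at 0; lra.
apply: Rnot_lt_le => a_lt_q.
have a_neq0 : a <> 0 by lra.
set u := q / a.
have q_ua : q = u * a by rewrite /u; field.
have u_range : 0 <= u < 1 by rewrite q_ua in q_le0 a_lt_q; split; nra.
have := le_at ((1 + u) / 2) ltac:(lra); nra.
Qed.

Lemma inexact_decrease_bound (S m q r : R) : 0 <= S -> 0 <= r < 1 ->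
  q <= (1 - r * r) * m ->
  (forall t, 0 <= t <= 1 -> m <= t * q - S / 2 * t * (1 - t)) ->
  q <= - (S / 2) * ((1 - r) / (1 + r)).
Proof.
move=> S_ge0 r_range q_le segment.
have [r0|r_gt0] : r = 0 \/ 0 < r by lra.
  have -> : - (S / 2) * ((1 - r) / (1 + r)) = - (S / 2) by rewrite r0; field.
  apply: le_of_forall_lt1 => t t_range.
  have := segment t ltac:(lra); rewrite r0 in q_le => seg_t.
  apply: (Rmult_le_reg_l (1 - t)); [lra | nra].
(* the bound is optimized at the segment point t = 1 / (1 + r) *)
set t := 1 / (1 + r).
have t_r : t * (1 + r) = 1 by rewrite /t; field; lra.
have -> : (1 - r) / (1 + r) = (1 - r) * t by rewrite /t; field; lra.
have t_range : 0 <= t <= 1 by nra.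
have seg_t : m <= t * q - S / 2 * r * t * t.
  have := segment t t_range; have -> : 1 - t = r * t by lra.
  lra.
have : q <= (1 - r * r) * (t * q - S / 2 * r * t * t).
  by apply: (Rle_trans _ _ _ q_le); apply: Rmult_le_compat_l; nra.
have -> : (1 - r * r) * (t * q - S / 2 * r * t * t)
          = ((1 - r * r) * t) * q - S / 2 * r * ((1 - r * r) * t) * t by ring.
have -> : (1 - r * r) * t = 1 - r by nra.
move=> q_bound; apply: (Rmult_le_reg_l r) => //; nra.
Qed.

Lemma ele_fin_trans (a b : R) (A : ereal) : ele (Fin a) A -> ele A (Fin b) -> a <= b.
Proof. by case: A => //= v; lra. Qed.

Section Model.
Variable n : nat.
Implicit Types (x d gx : vec n) (H : mat n) (psi : vec n -> ereal).

Lemma vadd0 x : vadd x (fun _ => 0) = x.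
Proof. by apply: functional_extensionality => i; rewrite /vadd Rplus_0_r. Qed.

Lemma vsub0 x : vsub x (fun _ => 0) = x.
Proof. by apply: functional_extensionality => i; rewrite /vsub Rminus_0_r. Qed.

Lemma Qmodel0 gx H psi x px : psi x = Fin px -> Qmodel gx H psi x (fun _ => 0) = Fin 0.
Proof.
move=> psi_x; rewrite /Qmodel /quad vadd0 psi_x dot0r dot_comm dot0r /=.
by congr Fin; ring.
Qed.

Lemma QmodelE gx H psi x d q : Qmodel gx H psi x d = Fin q ->
  exists pd, psi (vadd x d) = Fin pd /\
             q = dot gx d + eval_r (Fin pd) - eval_r (psi x) + / 2 * quad H d.
Proof. by rewrite /Qmodel; case: (psi _) => //= pd [<-]; exists pd; split => //; ring. Qed.

Lemma strongly_convex_inexact_bound (Q : vec n -> ereal) sigma eta d :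
  0 <= sigma -> 0 <= eta < 1 -> strongly_convex Q sigma -> Q (fun _ => 0) = Fin 0 ->
  eta_inexact Q eta d ->
  exists q, Q d = Fin q /\
            q <= - (sigma * norm d ^ 2 / 2) * ((1 - sqrt eta) / (1 + sqrt eta)).
Proof.
move=> sigma_ge0 eta_range sconv Q0 [m [[m_lb _]]]; rewrite Q0 /=.
case Qd: (Q d) => [q|] //= q_le; exists q; split => //.
apply: (@inexact_decrease_bound _ m).
- by apply: Rmult_le_pos => //; exact: pow2_ge_0.
- by split; [exact: sqrt_pos | rewrite -sqrt_1; apply: sqrt_lt_1_alt; lra].
- by rewrite sqrt_sqrt; lra.
move=> t t_range; have := ele_fin_trans (m_lb _) (sconv _ _ _ _ _ Qd Q0 t_range).
by rewrite vsub0; lra.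
Qed.
End Model.

Lemma armijo_small_step n (f : vec n -> R) g L psi x d px pd gamma kappa a :
  has_gradient f g -> lipschitz g L -> econvex psi ->
  psi x = Fin px -> psi (vadd x d) = Fin pd ->
  dot (g x) d + pd - px <= - (kappa / 2) * norm d ^ 2 ->
  gamma <= 1 -> 0 <= a <= 1 -> a * L <= (1 - gamma) * kappa ->
  armijo f psi x d a gamma (dot (g x) d + pd - px).
Proof.
move=> grad lip conv psi_x psi_xd Delta_le gamma_le1 a_range step_small.
have := conv _ _ _ _ _ psi_xd psi_x a_range.
have -> : vadd (vscale a (vadd x d)) (vscale (1 - a) x) = vadd x (vscale a d).
  by apply: functional_extensionality => i; rewrite /vadd /vscale; ring.
rewrite /armijo /Fobj psi_x /=; case: (psi _) => [pa|] //= psi_step.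
have := descent_lemma grad lip x (vscale a d).
rewrite dotZr norm_scale Rabs_pos_eq; last lra.
set N := norm d in Delta_le *; set Delta := dot (g x) d + pd - px in Delta_le * => f_step.
have : a * ((1 - gamma) * Delta) <= a * ((1 - gamma) * (- (kappa / 2) * N ^ 2)).
  by apply: Rmult_le_compat_l; [lra | apply: Rmult_le_compat_l; lra].
have : a * N ^ 2 * (a * L) <= a * N ^ 2 * ((1 - gamma) * kappa).
  by apply: Rmult_le_compat_l => //; apply: Rmult_le_pos; [lra | exact: pow2_ge_0].
rewrite /Delta in f_step *; nra.
Qed.

Lemma pow_range (beta : R) (j : nat) : 0 <= beta <= 1 -> 0 <= beta ^ j <= 1.
Proof.
move=> beta_range; split; first by apply: pow_le; lra.
by rewrite -(pow1 j); apply: pow_incr.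
Qed.

Lemma backtracking_step_bound (P : R -> Prop) (beta bnd : R) :
  0 < beta < 1 -> 0 < bnd -> (forall a, 0 <= a <= 1 -> a <= bnd -> P a) ->
  exists i : nat, P (beta ^ i) /\ (forall j : nat, (j < i)%nat -> ~ P (beta ^ j)) /\
                  Rmin 1 (beta * bnd) <= beta ^ i.
Proof.
move=> beta_range bnd_gt0 accept.
have [j0 small] := pow_lt_1_zero beta ltac:(rewrite Rabs_pos_eq; lra) bnd bnd_gt0.
have P_j0 : P (beta ^ j0).
  apply: accept; first by apply: pow_range; lra.
  by have := small j0 (le_n _); rewrite Rabs_pos_eq; [lra | apply: pow_le; lra].
have [i [[P_i least] _]] := @dec_inh_nat_subset_has_unique_least_element
  (fun j => P (beta ^ j)) (fun j => classic _) (ex_intro _ j0 P_j0).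
have before_i j : (j < i)%nat -> ~ P (beta ^ j).
  by move=> /ltP j_lt_i /least; lia.
exists i; split => //; split => //.
case: i P_i least before_i => [|i] _ _ before_i; first exact: Rmin_l.
have : bnd < beta ^ i.
  apply: Rnot_le_lt => pow_le_bnd; apply: (before_i i (ltnSn i)).
  by apply: accept => //; apply: pow_range; lra.
have := Rmin_r 1 (beta * bnd); rewrite /=; nra.
Qed.

Theorem lemma3 (n : nat) (f : vec n -> R) (g : vec n -> vec n) (L : R)
  (psi : vec n -> ereal)
  (HL : 0 < L) (Hgrad : has_gradient f g) (Hlip : lipschitz g L)
  (Hconv : econvex psi) (Hprop : eproper psi) (Hclosed : eclosed psi)
  (Hbdd : exists m : R, forall y, ele (Fin m) (Fobj f psi y))
  (Homega : exists xs : vec n, Fobj f psi xs <> PInf /\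
                               forall y, ele (Fobj f psi xs) (Fobj f psi y))
  (x : vec n) (Hx : psi x <> PInf)
  (H : mat n) (Hsym : mat_symmetric H) (lam : R) (Hlam : is_lambda_min H lam)
  (sigma : R) (Hsigma : 0 < sigma)
  (HQ : strongly_convex (Qmodel (g x) H psi x) sigma)
  (eta : R) (Heta : 0 <= eta < 1) (d : vec n)
  (Hd : eta_inexact (Qmodel (g x) H psi x) eta d) :
  let Delta := dot (g x) d + eval_r (psi (vadd x d)) - eval_r (psi x) in
  let c := (1 - sqrt eta) / (1 + sqrt eta) in
  (Delta <= - / 2 * (c * sigma * (norm d)^2 + quad H d) /\
   - / 2 * (c * sigma * (norm d)^2 + quad H d)
     <= - / 2 * (c * sigma + lam) * (norm d)^2) /\
  (0 < (1 - sqrt eta) * sigma + (1 + sqrt eta) * lam ->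
   forall beta gamma, 0 < beta < 1 -> 0 < gamma < 1 ->
   exists i : nat,
     armijo f psi x d (beta ^ i) gamma Delta /\
     (forall j : nat, (j < i)%nat -> ~ armijo f psi x d (beta ^ j) gamma Delta) /\
     Rmin 1 (beta * (1 - gamma) *
             (((1 - sqrt eta) * sigma + (1 + sqrt eta) * lam) / (L * (1 + sqrt eta))))
       <= beta ^ i).
Proof.
move=> Delta c.
have [px psi_x] : exists px, psi x = Fin px by case: (psi x) Hx => [px|] // _; exists px.
have [q [Qd q_le]] := strongly_convex_inexact_bound
  (Rlt_le _ _ Hsigma) Heta HQ (Qmodel0 (g x) H psi_x) Hd.
have [pd [psi_xd qE]] := QmodelE Qd.
have DeltaE : Delta = dot (g x) d + pd - px by rewrite /Delta psi_xd psi_x.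
have lam_quad : lam * norm d ^ 2 <= quad H d.
  by rewrite norm_sq; apply/RleP; exact: lambda_min_quad_le.
have Delta_le : Delta <= - / 2 * (c * sigma * norm d ^ 2 + quad H d).
  by rewrite psi_x /= in qE; fold c in q_le; lra.
split; first by split => //; nra.
move=> kappa_gt0 beta gamma beta_range gamma_range.
set r := sqrt eta in kappa_gt0 *.
set kappa := (1 - r) * sigma + (1 + r) * lam in kappa_gt0 *.
have r_ge0 : 0 <= r by exact: sqrt_pos.
have c_kappa : c * sigma + lam = kappa / (1 + r) by rewrite /c -/r /kappa; field; lra.
rewrite Rmult_assoc.
apply: (backtracking_step_bound (P := fun a => armijo f psi x d a gamma Delta)) => //.
  by apply: Rmult_lt_0_compat; [lra | apply: Rdiv_lt_0_compat; nra].
move=> a a_range a_small; rewrite DeltaE.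
apply: (armijo_small_step (kappa := kappa / (1 + r))) => //.
- by rewrite -DeltaE -c_kappa; nra.
- lra.
have -> : (1 - gamma) * (kappa / (1 + r)) = (1 - gamma) * (kappa / (L * (1 + r))) * L
  by field; lra.
by apply: Rmult_le_compat_r; lra.
Qed.
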